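(* For every detector $\hat\theta$, every $p>1$, and every measurable $\zeta_2:\mathcal{X}\to(0,\infty)$ with ${\rm E}[\zeta_2(\mathbf{x})]<\infty$ and ${\rm E}\big[\zeta_2(\mathbf{x})^{\frac{1}{1-p}}\sum_{i=1}^M P(\theta_i|\mathbf{x})^{\frac{p}{p-1}}\big]<\infty$, $$P_e\geq 1-{\rm E}^{\frac1p}\big[\zeta_2(\mathbf{x})\big]\;{\rm E}^{\frac{p-1}{p}}\Big[\zeta_2(\mathbf{x})^{\frac{1}{1-p}}\sum_{i=1}^M P(\theta_i|\mathbf{x})^{\frac{p}{p-1}}\Big].$$
   Context: $M$-ary hypothesis testing: the true hypothesis $\theta$ is a random variable with values in $\{\theta_1,\ldots,\theta_M\}$, $\mathbf{x}$ is a random observation in a measurable space $\mathcal{X}$, and $P(\theta_i|\mathbf{x})$ is the posterior probability of $\theta_i$ given $\mathbf{x}$, assumed to satisfy $P(\theta_i|\mathbf{x})>0$ for all $\mathbf{x}$, $i$. A detector is a measurable map $\hat\theta:\mathcal{X}\to\{\theta_1,\ldots,\theta_M\}$, and its probability of error is $P_e=\Pr(\hat\theta(\mathbf{x})\neq\theta)$. ${\rm E}^a[Y]$ denotes $({\rm E}[Y])^a$. *)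

From mathcomp Require Import all_boot all_order all_algebra.
From mathcomp Require Import all_classical all_reals all_analysis.
Set Implicit Arguments. Unset Strict Implicit. Unset Printing Implicit Defensive.
Import Order.TTheory GRing.Theory Num.Theory.
Local Open Scope classical_set_scope.
Local Open Scope ring_scope.

(* A map into the finite hypothesis index set 'I_M is measurable for the
   discrete sigma-algebra on 'I_M iff every fibre is measurable. *)
Definition meas_index {d} {T : measurableType d} {M : nat} (f : T -> 'I_M) :=
  forall i : 'I_M, measurable (f @^-1` [set i]).

(* post is a (version of the) posterior P(theta_i | x): for every i it is a
   measurable function of x and, for every measurable A,
   Pr(theta = theta_i, x \in A) = E[ post i (x) ; x \in A ]. *)
Definition is_posterior {d d'} {Omega : measurableType d} {R : realType}
  {X : measurableType d'} {M : nat} (P : probability Omega R)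
  (theta : Omega -> 'I_M) (x : Omega -> X) (post : 'I_M -> X -> R) :=
  (forall i, measurable_fun setT (post i)) /\
  forall (i : 'I_M) (A : set X), measurable A ->
    P ([set w | theta w = i] `&` (x @^-1` A)) =
    (\int[P]_(w in x @^-1` A) (post i (x w))%:E)%E.

From mathcomp Require Import all_boot all_order all_algebra.
From mathcomp Require Import all_classical all_reals all_analysis.
From mathcomp Require Import ring.
Set Implicit Arguments. Unset Strict Implicit. Unset Printing Implicit Defensive.
Import Order.TTheory GRing.Theory Num.Theory measurable_realfun.
Local Open Scope classical_set_scope.
Local Open Scope ring_scope.

(* The probability of a correct decision is E[P(thetahat(x) | x)].  Writing
   P(thetahat(x) | x) = zeta2^(1/p) * (zeta2^(-1/p) P(thetahat(x) | x)) and
   applying Hoelder with exponents p and p/(p-1) bounds it by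
   E^(1/p)[zeta2] E^((p-1)/p)[zeta2^(1/(1-p)) P(thetahat(x) | x)^(p/(p-1))],
   and the posterior of the decided hypothesis is one term of the sum over i. *)

Lemma bigsetU_ordP (T : Type) (n : nat) (F : 'I_n -> set T) (t : T) :
  (\big[setU/set0]_(i < n) F i) t <-> exists i, F i t.
Proof.
split; last by case=> i Fit; rewrite (bigD1 i) //=; left.
apply: (@big_ind _ (fun A => A t -> exists i, F i t)) => //.
- by move=> A B HA HB [/HA|/HB].
- by move=> i _ Fit; exists i.
Qed.

Section WeightedHoelder.
Context d (T : measurableType d) (R : realType) (mu : {measure set T -> \bar R}).
Variables (p : R) (z h : T -> R).
Hypotheses (p_gt1 : 1 < p) (mz : measurable_fun setT z) (mh : measurable_fun setT h).
Hypotheses (z_gt0 : forall t, 0 < z t) (h_ge0 : forall t, 0 <= h t).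

Lemma weighted_hoelder :
  (\int[mu]_t (h t)%:E <=
     (\int[mu]_t (z t)%:E) `^ p^-1 *
     (\int[mu]_t (z t `^ (1 / (1 - p)) * h t `^ (p / (p - 1)))%:E)
       `^ ((p - 1) / p))%E.
Proof.
have p_gt0 : 0 < p by apply: lt_trans p_gt1.
have p1_gt0 : 0 < p - 1 by rewrite subr_gt0.
set q := p / (p - 1).
have q_gt0 : 0 < q by rewrite divr_gt0.
have conj_pq : p^-1 + q^-1 = 1 by rewrite /q invf_div; field; rewrite gt_eqF.
pose f t := z t `^ p^-1.
pose g t := z t `^ (- p^-1) * h t.
have mf : measurable_fun setT f := measurableT_comp (measurable_powR _) mz.
have mg : measurable_fun setT g.
  by apply: measurable_funM => //; exact: measurableT_comp (measurable_powR _) mz.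
have g_ge0 t : 0 <= g t by rewrite mulr_ge0 ?powR_ge0.
have fgE t : f t * g t = h t.
  rewrite /f /g mulrA -powRD; last by rewrite (gt_eqF (z_gt0 _)) implybT.
  by rewrite addrN powRr0 mul1r.
have N1E : Lnorm mu 1 (EFin \o (f \* g)) = (\int[mu]_t (h t)%:E)%E.
  by rewrite Lnorm1; apply: eq_integral => t _ /=; rewrite fgE ger0_norm ?h_ge0.
have NpE : Lnorm mu p%:E (EFin \o f) = ((\int[mu]_t (z t)%:E) `^ p^-1)%E.
  rewrite unlock /=; congr (_ `^ _)%E; apply: eq_integral => t _ /=.
  by rewrite ger0_norm ?powR_ge0 // -powRrM mulVf ?gt_eqF // powRr1 // ltW.
have NqE : Lnorm mu q%:E (EFin \o g) =
    ((\int[mu]_t (z t `^ (1 / (1 - p)) * h t `^ q)%:E) `^ ((p - 1) / p))%E.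
  rewrite unlock /= /q invf_div; congr (_ `^ _)%E; apply: eq_integral => t _ /=.
  rewrite ger0_norm // powRM ?powR_ge0 // -powRrM.
  congr ((z t `^ _ * _)%:E); field.
  by rewrite subr_eq0 (lt_eqF p_gt1) (gt_eqF p1_gt0) (gt_eqF p_gt0).
rewrite -N1E -NpE -NqE.
exact: hoelder.
Qed.

End WeightedHoelder.

Lemma measurable_fun_select d (X : measurableType d) (R : realType) (M : nat)
    (f : 'I_M -> X -> R) (sel : X -> 'I_M) :
  (forall i, measurable_fun setT (f i)) -> meas_index sel ->
  measurable_fun setT (fun y => f (sel y) y).
Proof.
move=> mf msel.
have -> : (fun y => f (sel y) y) =
    (fun y => \sum_(i < M) f i y * \1_(sel @^-1` [set i]) y).
  apply/funext => y; rewrite (bigD1 (sel y)) //= big1 ?addr0.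
    by rewrite indicE mem_set ?mulr1.
  by move=> i iN; rewrite indicE memNset ?mulr0 //= => e; rewrite e eqxx in iN.
by apply: measurable_sum => i; apply: measurable_funM => //; exact: measurable_indic.
Qed.

Section CorrectDecision.
Context (R : realType) (d d' : measure_display).
Context (Omega : measurableType d) (X : measurableType d') (P : probability Omega R).
Variables (M : nat) (theta : Omega -> 'I_M) (x : Omega -> X) (post : 'I_M -> X -> R).
Hypotheses (mtheta : meas_index theta) (mx : measurable_fun setT x).
Hypotheses (Hpost : is_posterior P theta x post) (post_ge0 : forall i y, 0 <= post i y).
Variables (thetahat : X -> 'I_M).
Hypothesis mthetahat : meas_index thetahat.

Definition correct_event := [set w | thetahat (x w) == theta w].

Let decided i := x @^-1` (thetahat @^-1` [set i]).

Let measurable_decided i : measurable (decided i).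
Proof. by have := mx measurableT (mthetahat i); rewrite setTI. Qed.

Lemma correct_eventE :
  correct_event = \big[setU/set0]_(i < M) ([set w | theta w = i] `&` decided i).
Proof.
apply/seteqP; split => w /=.
  by move/eqP => e; apply/bigsetU_ordP; exists (theta w).
move=> /bigsetU_ordP [i [/= theta_i thetahat_i]].
by apply/eqP; rewrite theta_i; exact: thetahat_i.
Qed.

Lemma measurable_correct_event : measurable correct_event.
Proof.
rewrite correct_eventE; apply: bigsetU_measurable => i _.
by apply: measurableI => //; exact: mtheta.
Qed.

Lemma prob_correct_event :
  P correct_event = (\int[P]_w (post (thetahat (x w)) (x w))%:E)%E.
Proof.
rewrite correct_eventE measure_bigsetU_ord //; first last.
- by move=> i j _ _ [w [[/= <- _] [/= <- _]]].
- by move=> i; apply: measurableI => //; exact: mtheta.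
have mpost i : measurable_fun setT (fun w => post i (x w)).
  exact: measurableT_comp (Hpost.1 i) mx.
transitivity (\sum_(i < M)
    \int[P]_w ((fun w => (post i (x w))%:E) \_ (decided i) w))%E.
  apply: eq_bigr => i _; rewrite -integral_mkcond.
  exact: Hpost.2 i _ (mthetahat i).
rewrite -ge0_integral_sum //; first last.
- by move=> i w _; rewrite patchE; case: ifP; rewrite // lee_fin.
- move=> i; apply/(measurable_restrictT _ (measurable_decided i)).1 => //.
  by apply/measurable_EFinP; exact: measurable_funS (mpost i).
apply: eq_integral => w _; rewrite (bigD1 (thetahat (x w))) //= big1 ?adde0.
  by rewrite patchE mem_set.
by move=> i iN; rewrite patchE memNset //= => e; rewrite e eqxx in iN.
Qed.

Section HoelderBound.
Variables (p : R) (zeta : X -> R).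
Hypotheses (p_gt1 : 1 < p) (mzeta : measurable_fun setT zeta).
Hypothesis zeta_gt0 : forall y, 0 < zeta y.

Let mpost_decided : measurable_fun setT ((fun y => post (thetahat y) y) \o x).
Proof. exact: measurableT_comp (measurable_fun_select Hpost.1 mthetahat) mx. Qed.

Let mzeta_x : measurable_fun setT (zeta \o x).
Proof. exact: measurableT_comp mzeta mx. Qed.

Lemma integral_decided_posterior_le :
  (\int[P]_w (zeta (x w) `^ (1 / (1 - p)) *
               post (thetahat (x w)) (x w) `^ (p / (p - 1)))%:E <=
   \int[P]_w (zeta (x w) `^ (1 / (1 - p)) *
               \sum_(i < M) post i (x w) `^ (p / (p - 1)))%:E)%E.
Proof.
apply: ge0_le_integral => //.
- by move=> w _; rewrite lee_fin mulr_ge0 ?powR_ge0.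
- apply/measurable_EFinP; apply: measurable_funM.
    exact: measurableT_comp (measurable_powR _) mzeta_x.
  exact: measurableT_comp (measurable_powR _) mpost_decided.
- apply/measurable_EFinP; apply: measurable_funM.
    exact: measurableT_comp (measurable_powR _) mzeta_x.
  apply: measurable_sum => i; apply: measurableT_comp (measurable_powR _) _.
  exact: measurableT_comp (Hpost.1 i) mx.
move=> w _; rewrite lee_fin ler_wpM2l ?powR_ge0 // (bigD1 (thetahat (x w))) //=.
by rewrite lerDl sumr_ge0 // => i _; rewrite powR_ge0.
Qed.

Lemma prob_correct_event_le :
  (P correct_event <= (\int[P]_w (zeta (x w))%:E) `^ p^-1 *
     (\int[P]_w (zeta (x w) `^ (1 / (1 - p)) *
                 \sum_(i < M) post i (x w) `^ (p / (p - 1)))%:E) `^ ((p - 1) / p))%E.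
Proof.
rewrite prob_correct_event.
apply: le_trans (weighted_hoelder P p_gt1 mzeta_x mpost_decided
  (fun w => zeta_gt0 (x w)) (fun w => post_ge0 _ _)) _.
apply: lee_pmul; rewrite ?poweR_ge0 //.
apply: gt0_ler_poweR; last exact: integral_decided_posterior_le.
- by apply: divr_ge0; [rewrite subr_ge0 ltW | rewrite ltW // (lt_trans ltr01)].
- rewrite in_itv /= leey andbT integral_ge0 // => w _.
  by rewrite lee_fin mulr_ge0 ?powR_ge0.
- rewrite in_itv /= leey andbT integral_ge0 // => w _.
  by rewrite lee_fin mulr_ge0 ?powR_ge0 // sumr_ge0 // => i _; rewrite powR_ge0.
Qed.

End HoelderBound.

End CorrectDecision.

Lemma probability_setC_ge d (T : measurableType d) (R : realType)
    (P : probability T R) (C : set T) (c : R) :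
  measurable C -> (P C <= c%:E)%E -> ((1 - c)%:E <= P (~` C))%E.
Proof.
move=> mC PC_le; have PC_fin : P C \is a fin_num by rewrite fin_num_measure.
rewrite probability_setC // -(fineK PC_fin).
rewrite -(fineK PC_fin) lee_fin in PC_le.
by rewrite -EFinB lee_fin lerD2l lerN2.
Qed.

Theorem mainTheorem4 (R : realType) (d d' : measure_display)
  (Omega : measurableType d) (X : measurableType d') (P : probability Omega R)
  (M : nat) (theta : Omega -> 'I_M) (x : Omega -> X) (post : 'I_M -> X -> R)
  (Htheta : meas_index theta) (Hx : measurable_fun setT x)
  (Hpost : is_posterior P theta x post)
  (Hpos : forall (i : 'I_M) (y : X), 0 < post i y)
  (thetahat : X -> 'I_M) (Hdet : meas_index thetahat)
  (p : R) (Hp : 1 < p)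
  (zeta2 : X -> R) (Hzm : measurable_fun setT zeta2)
  (Hzpos : forall y, 0 < zeta2 y)
  (Hz1 : (\int[P]_w (zeta2 (x w))%:E < +oo)%E)
  (Hz2 : (\int[P]_w (zeta2 (x w) `^ (1 / (1 - p)) *
            \sum_(i < M) post i (x w) `^ (p / (p - 1)))%:E < +oo)%E) :
  ((1 - fine (\int[P]_w (zeta2 (x w))%:E) `^ (1 / p) *
        fine (\int[P]_w (zeta2 (x w) `^ (1 / (1 - p)) *
            \sum_(i < M) post i (x w) `^ (p / (p - 1)))%:E) `^ ((p - 1) / p))%:E
   <= P [set w | thetahat (x w) != theta w])%E.
Proof.
set A := (\int[P]_w (zeta2 (x w))%:E)%E in Hz1 *.
set B := (\int[P]_w _)%E in Hz2 *.
have post_ge0 i y : 0 <= post i y by exact: ltW.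
have A_fin : A \is a fin_num.
  by rewrite ge0_fin_numE // integral_ge0 // => w _; rewrite lee_fin ltW.
have B_fin : B \is a fin_num.
  rewrite ge0_fin_numE // integral_ge0 // => w _.
  by rewrite lee_fin mulr_ge0 ?powR_ge0 // sumr_ge0 // => i _; rewrite powR_ge0.
have errorE : [set w | thetahat (x w) != theta w] =
    ~` correct_event theta x thetahat.
  by apply/seteqP; split => w; rewrite /correct_event /=; case: eqP.
rewrite errorE div1r; apply: probability_setC_ge.
  exact: measurable_correct_event.
have := prob_correct_event_le Htheta Hx Hpost post_ge0 Hdet Hp Hzm Hzpos.
by rewrite -/A -/B -(fineK A_fin) -(fineK B_fin) !poweR_EFin -EFinM.
Qed.
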